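(* Let $(X_1,d_1),\dots,(X_{n+1},d_{n+1})$ be metric spaces, $f_i:X_i\to X_{i+1}$ for $i=1,\dots,n$, $\Pi=f_n\circ\cdots\circ f_1$, and let $\delta_i$ be a decision map defined on $X_{i+1}$. Suppose each layer $i$ is certified with gain $g_i\in\mathbb{Q}_{\ge0}$ and margin $m_i\in\mathbb{Q}_{\ge0}$, meaning: for all $x,x'\in X_i$ with $d_i(x,x')<m_i$, both $d_{i+1}(f_i(x),f_i(x'))\le g_i\,d_i(x,x')$ and $\delta_i(f_i(x))=\delta_i(f_i(x'))$. Let $\varepsilon_0\ge0$, define $\varepsilon^\star_1=\varepsilon_0$ and $\varepsilon^\star_{i+1}=g_i\varepsilon^\star_i$, and assume $\varepsilon^\star_i<m_i$ for every $i=1,\dots,n$. Then for all $x_0,x'\in X_1$ with $d_1(x_0,x')<\varepsilon_0$, $\delta_n(\Pi(x'))=\delta_n(\Pi(x_0))$.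
   Context: A pipeline layer is a map between metric spaces together with a discrete decision read off its output; ''certified with gain $g$ and margin $m$'' means it is $g$-Lipschitz on pairs of inputs at distance less than $m$ and its discrete decision is invariant for such pairs (nominal stability). The conclusion is invariance of the final layer's discrete decision (equivalently of the canonicalized output if the pipeline ends in a canonicalization step). *)

From Stdlib Require Import Reals QArith Qreals.
Open Scope R_scope.

Record MetricSpace := {
  carrier :> Type;
  mdist : carrier -> carrier -> R;
  dist_nonneg : forall x y, 0 <= mdist x y;
  dist_self : forall x, mdist x x = 0;
  dist_eq0 : forall x y, mdist x y = 0 -> x = y;
  dist_sym : forall x y, mdist x y = mdist y x;
  dist_tri : forall x y z, mdist x z <= mdist x y + mdist y z
}.

Arguments mdist {m} _ _.

Definition certified (A B : MetricSpace) (D : Type) (f : A -> B)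
  (delta : B -> D) (g m : Q) : Prop :=
  forall x x' : A, mdist x x' < Q2R m ->
    mdist (f x) (f x') <= Q2R g * mdist x x' /\ delta (f x) = delta (f x').

Fixpoint pipe (X : nat -> MetricSpace) (f : forall i, X i -> X (S i)) (k : nat)
  : X 0%nat -> X k :=
  match k with
  | O => fun x => x
  | S k' => fun x => f k' (pipe X f k' x)
  end.

Fixpoint eps_star (g : nat -> Q) (eps0 : R) (i : nat) : R :=
  match i with
  | O => eps0
  | S i' => Q2R (g i') * eps_star g eps0 i'
  end.

(* After k layers the two trajectories stay within eps_star k of each other:
   this is below the margin of layer k, so that layer's Lipschitz bound applies
   and propagates the estimate to eps_star (k+1).  At the last layer the same
   margin condition yields invariance of the decision. *)
From Stdlib Require Import Reals QArith Qreals.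
From Stdlib Require Import Lra Lia.
Open Scope R_scope.

Lemma Q2R_nonneg (q : Q) : (0 <= q)%Q -> 0 <= Q2R q.
Proof.
  intros hq. rewrite <- RMicromega.Q2R_0. now apply Qle_Rle.
Qed.

Lemma certified_step (A B : MetricSpace) (E : Type) (h : A -> B)
  (delta : B -> E) (g m : Q) (e : R) (x x' : A) :
  certified A B E h delta g m -> (0 <= g)%Q -> e < Q2R m -> mdist x x' <= e ->
  mdist (h x) (h x') <= Q2R g * e /\ delta (h x) = delta (h x').
Proof.
  intros hcert hg hem hxe.
  destruct (hcert x x' ltac:(lra)) as [hlip hdec].
  split; [|exact hdec].
  eapply Rle_trans; [exact hlip|].
  apply Rmult_le_compat_l; [apply Q2R_nonneg|]; assumption.
Qed.

Section Pipeline.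

Variables (X : nat -> MetricSpace) (f : forall i, X i -> X (S i)).
Variables (D : nat -> Type) (delta : forall i, X (S i) -> D i).
Variables (g m : nat -> Q) (eps0 : R).

Lemma pipe_dist_le_eps_star (k : nat) (x0 x' : X 0%nat) :
  (forall i, (i < k)%nat -> (0 <= g i)%Q) ->
  (forall i, (i < k)%nat -> certified (X i) (X (S i)) (D i) (f i) (delta i) (g i) (m i)) ->
  (forall i, (i < k)%nat -> eps_star g eps0 i < Q2R (m i)) ->
  mdist x0 x' <= eps0 ->
  mdist (pipe X f k x0) (pipe X f k x') <= eps_star g eps0 k.
Proof.
  induction k as [|k IH]; intros hg hcert hmargin hx; [exact hx|].
  assert (hk : (k < S k)%nat) by lia.
  assert (hprev : mdist (pipe X f k x0) (pipe X f k x') <= eps_star g eps0 k)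
    by (apply IH; auto).
  apply (certified_step (X k) (X (S k)) (D k) (f k) (delta k) (g k) (m k)); auto.
Qed.

End Pipeline.

(* 0-based indexing: layers i = 0..n (i.e. n+1 >= 1 layers), spaces X 0 .. X (n+1),
   f i : X i -> X (i+1), delta i : X (i+1) -> D i. *)
Theorem mainTheorem6
  (n : nat) (X : nat -> MetricSpace) (f : forall i, X i -> X (S i))
  (D : nat -> Type) (delta : forall i, X (S i) -> D i)
  (g m : nat -> Q)
  (hg : forall i, (i <= n)%nat -> (0 <= g i)%Q)
  (hm : forall i, (i <= n)%nat -> (0 <= m i)%Q)
  (hcert : forall i, (i <= n)%nat -> certified (X i) (X (S i)) (D i) (f i) (delta i) (g i) (m i))
  (eps0 : R) (heps0 : 0 <= eps0)
  (hmargin : forall i, (i <= n)%nat -> eps_star g eps0 i < Q2R (m i)) :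
  forall x0 x' : X 0%nat, mdist x0 x' < eps0 ->
    delta n (pipe X f (S n) x') = delta n (pipe X f (S n) x0).
Proof.
  intros x0 x' hx.
  assert (htraj : mdist (pipe X f n x0) (pipe X f n x') <= eps_star g eps0 n).
  { apply (pipe_dist_le_eps_star X f D delta g m); intros; try lra;
      [apply hg | apply hcert | apply hmargin]; lia. }
  destruct (certified_step _ _ _ _ _ _ _ _ _ _ (hcert n (le_n n)) (hg n (le_n n))
              (hmargin n (le_n n)) htraj) as [_ hdec].
  symmetry. exact hdec.
Qed.
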